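(* For every integer $m\geq 3$, the edge set of $C_m[4]$ can be partitioned into two $C_4$-factors and two $C_m$-factors.
   Context: For a graph $G$ and a positive integer $k$, $G[k]$ is the graph with vertex set $V(G)\times\{0,1,\dots,k-1\}$ in which $(u,i)$ and $(w,j)$ are adjacent if and only if $uw\in E(G)$. $C_m$ is the cycle of length $m$. A $C_k$-factor of a graph is a spanning subgraph each of whose components is a cycle of length $k$. *)

From HB Require Import structures.
From mathcomp Require Import all_boot.
Set Implicit Arguments. Unset Strict Implicit. Unset Printing Implicit Defensive.

(* A simple graph on a finite type T is given by a symmetric irreflexive
   adjacency relation; its edges are the 2-element sets {x, y} with e x y. *)
Definition edge_set (T : finType) (e : rel T) : {set {set T}} :=
  [set [set x; y] | x in [set: T], y in [pred z | e x z]].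

Definition cycle_adj (m : nat) : rel 'I_m :=
  fun u w => (val w == (val u).+1 %% m) || (val u == (val w).+1 %% m).

Definition lex_adj (T : finType) (e : rel T) (k : nat) : rel (T * 'I_k) :=
  fun x y => e x.1 y.1.
Arguments lex_adj [T] e k _ _.

Definition cycle_edges (T : finType) (c : seq T) : {set {set T}} :=
  [set [set x; next c x] | x in c].

Definition is_cycle_factor (T : finType) (k : nat) (F : {set {set T}}) : Prop :=
  exists cs : seq (seq T),
    [/\ all (fun c => size c == k) cs,
        uniq (flatten cs),
        (forall x : T, x \in flatten cs) &
        F = \bigcup_(c <- cs) cycle_edges c].

From HB Require Import structures.
From mathcomp Require Import all_boot zify.
Set Implicit Arguments. Unset Strict Implicit. Unset Printing Implicit Defensive.

(* Every edge of C_m[4] joins consecutive layers u and u+1, and the 16 edges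
   between two layers form a K_{4,4}.  We colour each such K_{4,4} with colours
   1..4 following one of three 4x4 patterns: in the generic pattern, colours 1
   and 2 are two 4-cycles, colour 3 is the matching i -- i and colour 4 the
   matching i -- i xor 1.  Colour 3 then gives four m-cycles "straight around"
   the ring, colour 4 gives m-cycles when m is even, and the 4-cycles of
   colours 1 and 2 tile the vertex set.  For odd m the last two layer pairs use
   two other patterns, whose colour-1 and colour-2 squares span three layers
   and whose colour-4 matchings close the m-cycles up. *)

Lemma mem_cycle_edges (T : finType) (c : seq T) (x y : T) :
  [set x; y] \in cycle_edges c -> x \in c.
Proof.
case/imsetP => z zc /setP/(_ x); rewrite !inE eqxx /= => /esym/orP[]/eqP-> //.
by rewrite mem_next.
Qed.

Lemma cycle_edges_quad (T : finType) (a b c d : T) : uniq [:: a; b; c; d] ->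
  cycle_edges [:: a; b; c; d] = [set [set a; b]; [set b; c]; [set c; d]; [set d; a]].
Proof.
rewrite /= !inE !negb_or => /and4P[/and3P[ab ac ad] /andP[bc bd] cd _].
have [ba ca da] : [/\ b != a, c != a & d != a] by split; rewrite eq_sym.
have [cb db dc] : [/\ c != b, d != b & d != c] by split; rewrite eq_sym.
apply/setP => S; apply/imsetP/idP => [[x]|].
  by rewrite !inE => /or4P[]/eqP-> ->; rewrite /next /= ?eqxx
    ?(negbTE ab, negbTE ac, negbTE ad, negbTE ba, negbTE bc, negbTE bd,
      negbTE ca, negbTE cb, negbTE cd, negbTE da, negbTE db, negbTE dc) ?eqxx ?orbT.
rewrite !inE -!orbA => /or4P[]/eqP->;
  [exists a | exists b | exists c | exists d]; by rewrite ?inE ?eqxx ?orbT // /next /=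
  ?eqxx ?(negbTE ba, negbTE ca, negbTE cb, negbTE da, negbTE db, negbTE dc) ?eqxx.
Qed.

(* Uniqueness of the vertices comes for free: the cycles cover all #|T|
   vertices with #|T| entries in total. *)
Lemma cycle_factor_of_family (T I : finType) (c : I -> seq T) (len : nat) :
  (forall v, size (c v) = len) -> (forall x, exists v, x \in c v) ->
  len * #|I| = #|T| -> is_cycle_factor len (\bigcup_(v : I) cycle_edges (c v)).
Proof.
move=> size_c cover_c card_c.
have in_flatten x : x \in flatten (map c (enum I)).
  by have [v xv] := cover_c x; apply/flatten_mapP; exists v; rewrite ?mem_enum.
exists (map c (enum I)); split => //; last by rewrite big_map big_enum.
- by apply/allP => _ /mapP[v _ ->]; rewrite size_c.
- apply: (leq_size_uniq (enum_uniq T)) => [x _ //|].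
  rewrite size_flatten /shape -map_comp sumnE big_map (eq_bigr (fun=> len)) => [|v _].
    by rewrite big_const_seq count_predT -!cardE iter_addn_0 card_c.
  by rewrite /= size_c.
Qed.

Definition o0 : 'I_4 := @Ordinal 4 0 isT.
Definition o1 : 'I_4 := @Ordinal 4 1 isT.
Definition o2 : 'I_4 := @Ordinal 4 2 isT.
Definition o3 : 'I_4 := @Ordinal 4 3 isT.

Lemma ord4_ind (P : 'I_4 -> Prop) : P o0 -> P o1 -> P o2 -> P o3 -> forall i, P i.
Proof.
by move=> P0 P1 P2 P3 [[|[|[|[|n]]]] lt_i4] //;
  [move: P0 | move: P1 | move: P2 | move: P3]; congr P; apply: val_inj.
Qed.

(* Entry (k, i, j) is the colour of the edge (u, i) -- (u+1, j) for a layer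
   pair u of kind k: kind 0 is generic, kinds 1 and 2 are the pairs
   (m-2, m-1) and (m-1, 0) when m is odd. *)
Definition colour_table : seq (seq (seq nat)) :=
  [:: [:: [:: 3; 4; 1; 1]; [:: 4; 3; 1; 1]; [:: 2; 2; 3; 4]; [:: 2; 2; 4; 3]];
      [:: [:: 3; 1; 4; 1]; [:: 1; 3; 1; 4]; [:: 2; 4; 3; 2]; [:: 4; 2; 2; 3]];
      [:: [:: 3; 2; 4; 1]; [:: 2; 3; 1; 4]; [:: 2; 4; 3; 1]; [:: 4; 2; 1; 3]]].

Definition table_colour (k i j : nat) : nat :=
  nth 0 (nth [::] (nth [::] colour_table k) i) j.

Lemma table_colour_range k (i j : 'I_4) : k < 3 -> 0 < table_colour k i j <= 4.
Proof. by case: k => [|[|[|k]]] // _; elim/ord4_ind: i; elim/ord4_ind: j. Qed.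

Lemma table_colour3 k (i j : 'I_4) : k < 3 -> (table_colour k i j == 3) = (i == j).
Proof. by case: k => [|[|[|k]]] // _; elim/ord4_ind: i; elim/ord4_ind: j. Qed.

Lemma table_colour4_inj k (i j j' : 'I_4) : k < 3 ->
  table_colour k i j = 4 -> table_colour k i j' = 4 -> j = j'.
Proof.
by case: k => [|[|[|k]]] // _; elim/ord4_ind: i; elim/ord4_ind: j; elim/ord4_ind: j'.
Qed.

Lemma table_colour_incident k k' c (i : 'I_4) : k < 3 -> k' < 3 -> 0 < c <= 4 ->
  exists j : 'I_4, table_colour k i j = c \/ table_colour k' j i = c.
Proof.
case: k => [|[|[|]]] // _; case: k' => [|[|[|]]] // _; case: c => [|[|[|[|[|]]]]] // _;
  elim/ord4_ind: i;
  first [exists o0; by [left | right] | exists o1; by [left | right]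
        | exists o2; by [left | right] | exists o3; by [left | right]].
Qed.

(* Levels of the colour-4 m-cycles: generic colour-4 edges join i to
   [pair_swap i], and [wrap_twist] is the level reached after the pair of
   kind 1 (so that the pair of kind 2 leads back to the starting level). *)
Definition pair_swap (i : 'I_4) : 'I_4 :=
  match val i with 0 => o1 | 1 => o0 | 2 => o3 | _ => o2 end.
Definition wrap_twist (i : 'I_4) : 'I_4 :=
  match val i with 0 => o3 | 1 => o2 | 2 => o0 | _ => o1 end.

Lemma pair_swap_inj : injective pair_swap.
Proof. by move=> a b; elim/ord4_ind: a; elim/ord4_ind: b => // /(congr1 val). Qed.

Lemma wrap_twist_inj : injective wrap_twist.
Proof. by move=> a b; elim/ord4_ind: a; elim/ord4_ind: b => // /(congr1 val). Qed.

Section LexCycle.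

Variable m : nat.
Hypothesis m_ge3 : 3 <= m.

Local Notation V := ('I_m * 'I_4)%type.
Local Notation E := (edge_set (lex_adj (@cycle_adj m) 4)).

Lemma val_ordS (u : 'I_m) : nat_of_ord (ordS u) = if u.+1 < m then u.+1 else 0.
Proof.
rewrite /ordS /=; case: ltnP => [lt_um|le_mu]; first by rewrite modn_small.
have -> : u.+1 = m by have := ltn_ord u; lia.
by rewrite modnn.
Qed.

Lemma ordS_neq (u : 'I_m) : ordS u != u.
Proof.
by apply/eqP => /(congr1 (@nat_of_ord m)); rewrite val_ordS; have := ltn_ord u; case: ifP; lia.
Qed.

Lemma ordSS_neq (u : 'I_m) : ordS (ordS u) != u.
Proof.
apply/eqP => /(congr1 (@nat_of_ord m)); rewrite !val_ordS; have := ltn_ord u.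
by case: ifP => /=; rewrite ?val_ordS; case: ifP; lia.
Qed.

Lemma next_enum_ord (u : 'I_m) : next (enum 'I_m) u = ordS u.
Proof.
rewrite next_nth mem_enum /=.
case E: (enum 'I_m) => [|y p]; first by have := mem_enum 'I_m u; rewrite E.
apply: ord_inj; rewrite val_ordS.
have size_p : size p = m.-1 by have := size_enum_ord m; rewrite E /=; lia.
have y0 : val y = 0 by have := @nth_enum_ord m y 0; rewrite E /=; apply; lia.
rewrite -E index_enum_ord; case: ltnP => [lt_um|le_mu].
  by have := @nth_enum_ord m y u.+1 lt_um; rewrite E.
by rewrite nth_default // size_p; lia.
Qed.

Definition layer_edge (u : 'I_m) (i j : 'I_4) : {set V} := [set (u, i); (ordS u, j)].

Lemma layer_edge_inj u i j u' i' j' :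
  layer_edge u i j = layer_edge u' i' j' -> [/\ u = u', i = i' & j = j'].
Proof.
move=> e.
have : (u, i) \in layer_edge u' i' j' by rewrite -e !inE eqxx.
have : (ordS u, j) \in layer_edge u' i' j' by rewrite -e !inE eqxx orbT.
rewrite !inE !xpair_eqE.
case/orP => /andP[/eqP e1 /eqP e2]; case/orP => /andP[/eqP eu /eqP ei] //.
- by move: (ordS_neq u); rewrite e1 eu eqxx.
- by move: (ordSS_neq u'); rewrite -eu -e1 eqxx.
- by move: (ordS_neq u'); rewrite -eu (ordS_inj e1) eqxx.
Qed.

Lemma edge_setP S : S \in E <-> exists u i j, S = layer_edge u i j.
Proof.
split => [|[u [i [j ->]]]].
  case/imset2P => [[u i] [w j]] _; rewrite inE /lex_adj /cycle_adj /= => /orP[]/eqP e ->.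
    have -> : w = ordS u by exact: val_inj.
    by exists u, i, j.
  have -> : u = ordS w by exact: val_inj.
  by exists w, j, i; rewrite /layer_edge setUC.
apply/imset2P; exists (u, i) (ordS u, j) => //.
by rewrite inE /lex_adj /cycle_adj /= eqxx.
Qed.

Definition layer_kind (u : 'I_m) : nat :=
  if odd m && (u.+2 == m) then 1 else if odd m && (u.+1 == m) then 2 else 0.

Lemma layer_kind_lt u : layer_kind u < 3.
Proof. by rewrite /layer_kind; case: ifP => //; case: ifP. Qed.

Lemma layer_kind_succ1 u : layer_kind u = 1 -> layer_kind (ordS u) = 2.
Proof.
rewrite /layer_kind val_ordS; have := ltn_ord u.
by case: (odd m) => //=; repeat case: ifP; lia.
Qed.

Lemma layer_kind_pred2 u : layer_kind u = 2 -> layer_kind (ord_pred u) = 1.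
Proof.
rewrite -{1}[u]ord_predK /layer_kind val_ordS; have := ltn_ord (ord_pred u).
by case: (odd m) => //=; repeat case: ifP; lia.
Qed.

Definition colour (u : 'I_m) (i j : 'I_4) : nat := table_colour (layer_kind u) i j.

Lemma colour_range u i j : 0 < colour u i j <= 4.
Proof. exact/table_colour_range/layer_kind_lt. Qed.

Definition edge_colour (S : {set V}) : nat :=
  if [pick t : 'I_m * 'I_4 * 'I_4 | S == layer_edge t.1.1 t.1.2 t.2] is Some (u, i, j)
  then colour u i j else 0.

Lemma edge_colourE u i j : edge_colour (layer_edge u i j) = colour u i j.
Proof.
rewrite /edge_colour; case: pickP => [[[u' i'] j'] /eqP/layer_edge_inj[-> -> ->] //|].
by move/(_ (u, i, j)); rewrite eqxx.
Qed.

Definition colour_class (k : nat) : {set {set V}} := [set S in E | edge_colour S == k].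

Lemma mem_colour_class k u i j : (layer_edge u i j \in colour_class k) = (colour u i j == k).
Proof.
rewrite inE edge_colourE andbC; case: eqP => //= _.
by apply/edge_setP; exists u, i, j.
Qed.

Lemma colour_incident k (u : 'I_m) (i : 'I_4) : 0 < k <= 4 ->
  exists j, colour u i j = k \/ colour (ord_pred u) j i = k.
Proof. exact/table_colour_incident/layer_kind_lt/layer_kind_lt. Qed.

Lemma colour_class_factor k (I : finType) (c : I -> seq V) (len : nat) :
  0 < k <= 4 -> (forall v, size (c v) = len) -> len * #|I| = m * 4 ->
  (forall v, cycle_edges (c v) \subset colour_class k) ->
  (forall u i j, colour u i j = k -> exists v, layer_edge u i j \in cycle_edges (c v)) ->
  is_cycle_factor len (colour_class k).
Proof.
move=> k_range size_c card_c sub_c cover_c.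
have -> : colour_class k = \bigcup_v cycle_edges (c v).
  apply/eqP; rewrite eqEsubset; apply/andP; split; last by apply/bigcupsP.
  apply/subsetP => S; rewrite inE => /andP[/edge_setP[u [i [j ->]]]].
  by rewrite edge_colourE => /eqP/cover_c[v ev]; apply/bigcupP; exists v.
apply: cycle_factor_of_family size_c _ _; last by rewrite card_prod !card_ord.
case=> u i; have [j [/cover_c[v ev] | /cover_c[v]]] := colour_incident u i k_range.
  by exists v; apply: mem_cycle_edges ev.
by rewrite /layer_edge ord_predK setUC => ev; exists v; apply: mem_cycle_edges ev.
Qed.

Definition flat_square (u : 'I_m) (a b c d : 'I_4) : seq V :=
  [:: (u, a); (ordS u, b); (u, c); (ordS u, d)].

Definition bent_square (u : 'I_m) (a b c d : 'I_4) : seq V :=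
  [:: (u, a); (ordS u, b); (ordS (ordS u), c); (ordS u, d)].

Lemma uniq_square (x y z w : 'I_m) (a b c d : 'I_4) :
  uniq [:: a; b; c; d] -> uniq [:: (x, a); (y, b); (z, c); (w, d)].
Proof. by move=> uq; apply: (@map_uniq _ _ snd). Qed.

Lemma cycle_edges_flat u a b c d : uniq [:: a; b; c; d] ->
  cycle_edges (flat_square u a b c d) =
  [set layer_edge u a b; layer_edge u c b; layer_edge u c d; layer_edge u a d].
Proof.
move/(uniq_square u (ordS u) u (ordS u))/cycle_edges_quad->.
by rewrite /layer_edge (setUC [set (ordS u, b)]) (setUC [set (ordS u, d)]).
Qed.

Lemma cycle_edges_bent u a b c d : uniq [:: a; b; c; d] ->
  cycle_edges (bent_square u a b c d) =
  [set layer_edge u a b; layer_edge (ordS u) b c; layer_edge (ordS u) d c; layer_edge u a d].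
Proof.
move/(uniq_square u (ordS u) (ordS (ordS u)) (ordS u))/cycle_edges_quad->.
by rewrite /layer_edge (setUC [set (ordS (ordS u), c)]) (setUC [set (ordS u, d)] [set (u, a)]).
Qed.

(* The 4-cycles of colour k = 1, 2: one per generic layer pair, and two, both
   spanning the layers m-2, m-1, 0, for the pairs of kinds 1 and 2. *)
Definition square_cycle (k : nat) (u : 'I_m) : seq V :=
  match layer_kind u, k with
  | 0, 1 => flat_square u o0 o2 o1 o3
  | 0, _ => flat_square u o2 o0 o3 o1
  | 1, 1 => bent_square u o0 o1 o2 o3
  | 1, _ => bent_square u o2 o0 o1 o3
  | _, 1 => bent_square (ord_pred u) o1 o0 o3 o2
  | _, _ => bent_square (ord_pred u) o3 o1 o0 o2
  end.

Lemma size_square_cycle k u : size (square_cycle k u) = 4.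
Proof. by rewrite /square_cycle; case: layer_kind => [|[|]]; case: k => [|[|]]. Qed.

Lemma square_cycle_coloured k u : 0 < k < 3 ->
  cycle_edges (square_cycle k u) \subset colour_class k.
Proof.
move=> k12; rewrite /square_cycle.
have := layer_kind_lt u; case Hk: (layer_kind u) => [|[|[|]]] // _;
  case: k k12 => [|[|[|]]] // _;
  rewrite ?cycle_edges_flat ?cycle_edges_bent // !subUset !sub1set ?ord_predK;
  by rewrite !mem_colour_class /colour ?Hk ?(layer_kind_succ1 Hk) ?(layer_kind_pred2 Hk).
Qed.

Lemma square_cycle_cover k u i j : 0 < k < 3 -> colour u i j = k ->
  exists v, layer_edge u i j \in cycle_edges (square_cycle k v).
Proof.
move=> k12; rewrite /colour; have := layer_kind_lt u.
case Hk: (layer_kind u) => [|[|[|]]] // _ col_k.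
- exists u; rewrite /square_cycle Hk.
  case: k k12 col_k => [|[|[|]]] // _; rewrite cycle_edges_flat //;
  by elim/ord4_ind: i; elim/ord4_ind: j => //= _; rewrite !inE eqxx ?orbT.
- suff /orP[e|e] : (layer_edge u i j \in cycle_edges (square_cycle k u))
                || (layer_edge u i j \in cycle_edges (square_cycle k (ordS u))).
  + by exists u.
  + by exists (ordS u).
  rewrite /square_cycle Hk (layer_kind_succ1 Hk) ordSK.
  case: k k12 col_k => [|[|[|]]] // _; rewrite !cycle_edges_bent //;
  by elim/ord4_ind: i; elim/ord4_ind: j => //= _; rewrite !inE eqxx ?orbT.
- suff /orP[e|e] : (layer_edge u i j \in cycle_edges (square_cycle k u))
                || (layer_edge u i j \in cycle_edges (square_cycle k (ord_pred u))).
  + by exists u.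
  + by exists (ord_pred u).
  rewrite /square_cycle Hk (layer_kind_pred2 Hk).
  case: k k12 col_k => [|[|[|]]] // _; rewrite !cycle_edges_bent // !ord_predK;
  by elim/ord4_ind: i; elim/ord4_ind: j => //= _; rewrite !inE eqxx ?orbT.
Qed.

Lemma square_factor k : 0 < k < 3 -> is_cycle_factor 4 (colour_class k).
Proof.
move=> k12; apply: (@colour_class_factor k _ (square_cycle k)).
- by lia.
- exact: size_square_cycle.
- by rewrite card_ord mulnC.
- by move=> u; apply: square_cycle_coloured.
- by move=> u i j; apply: square_cycle_cover.
Qed.

Definition transversal (g : 'I_m -> 'I_4) : seq V := [seq (u, g u) | u <- enum 'I_m].

Lemma cycle_edges_transversal g :
  cycle_edges (transversal g) = [set layer_edge u (g u) (g (ordS u)) | u : 'I_m].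
Proof.
have g_inj : injective (fun u => (u, g u)) by move=> ? ? [].
apply/setP => S; apply/imsetP/imsetP => [[_ /mapP[u _ ->] ->]|[u _ ->]].
  by exists u; rewrite // (next_map g_inj (enum_uniq _)) next_enum_ord.
by exists (u, g u); rewrite ?map_f ?mem_enum // (next_map g_inj (enum_uniq _)) next_enum_ord.
Qed.

Lemma transversal_factor k (g : 'I_4 -> 'I_m -> 'I_4) : 2 < k <= 4 ->
  (forall v u, colour u (g v u) (g v (ordS u)) = k) ->
  (forall u i j, colour u i j = k -> exists v, g v u = i /\ g v (ordS u) = j) ->
  is_cycle_factor m (colour_class k).
Proof.
move=> k34 g_col g_cover; apply: (@colour_class_factor k _ (fun v => transversal (g v))).
- by lia.
- by move=> v; rewrite size_map size_enum_ord.
- by rewrite card_ord.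
- move=> v; rewrite cycle_edges_transversal; apply/subsetP => _ /imsetP[u _ ->].
  by rewrite mem_colour_class g_col.
- move=> u i j /g_cover[v [gi gj]]; exists v; rewrite cycle_edges_transversal.
  by apply/imsetP; exists u; rewrite ?gi ?gj.
Qed.

Lemma straight_factor : is_cycle_factor m (colour_class 3).
Proof.
apply: (@transversal_factor 3 (fun v (_ : 'I_m) => v)) => //.
  by move=> v u; apply/eqP; rewrite /colour table_colour3 ?layer_kind_lt.
by move=> u i j /eqP; rewrite /colour table_colour3 ?layer_kind_lt // => /eqP->; exists j.
Qed.

Definition twist (u : 'I_m) (j : 'I_4) : 'I_4 :=
  if layer_kind u == 2 then wrap_twist j else if odd u then pair_swap j else j.

Lemma twist_inj u : injective (twist u).
Proof.
rewrite /twist; case: (layer_kind u == 2); first exact: wrap_twist_inj.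
by case: (odd u); [exact: pair_swap_inj | move=> ? ?].
Qed.

Lemma twist_colour u j : colour u (twist u j) (twist (ordS u) j) = 4.
Proof.
have lt_um := ltn_ord u.
rewrite /colour /twist /layer_kind val_ordS.
case: (ltngtP u.+2 m) => [lt_u2 | gt_u2 | e2].
- have [-> ->] : (u.+1 == m) = false /\ (u.+2 == m) = false by split; lia.
  by rewrite !andbF /=; case: (_ && _); case: (odd u); elim/ord4_ind: j.
- have e1 : u.+1 = m by lia.
  have [-> ->] : (2 == m) = false /\ (1 == m) = false by split; lia.
  have -> : odd m = ~~ odd u by rewrite -[m in odd m]e1.
  by rewrite e1 eqxx !andbF /=; case: (odd u); elim/ord4_ind: j.
- have [-> ->] : (u.+1 == m) = false /\ (u.+3 == m) = false by split; lia.
  have -> : odd m = odd u by rewrite -[m in odd m]e2 /= negbK.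
  by rewrite e2 eqxx !andbF !andbT /=; case: (odd u); elim/ord4_ind: j.
Qed.

Lemma twisted_factor : is_cycle_factor m (colour_class 4).
Proof.
apply: (@transversal_factor 4 (fun v u => twist u v)) => //.
  by move=> v u; apply: twist_colour.
move=> u i j c4; set v := finv (twist u) i.
have tv : twist u v = i by apply: f_finv; exact: twist_inj.
exists v; split=> //; apply: (table_colour4_inj (layer_kind_lt u) _ c4).
by rewrite -{1}tv; exact: twist_colour.
Qed.
End LexCycle.

Theorem mainTheorem4 (m : nat) (hm : 3 <= m) :
  exists F1 F2 F3 F4 : {set {set ('I_m * 'I_4)}},
    [/\ F1 :|: F2 :|: F3 :|: F4 = edge_set (lex_adj (@cycle_adj m) 4),
        [&& [disjoint F1 & F2], [disjoint F1 & F3], [disjoint F1 & F4],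
            [disjoint F2 & F3], [disjoint F2 & F4] & [disjoint F3 & F4]],
        is_cycle_factor 4 F1 /\ is_cycle_factor 4 F2 &
        is_cycle_factor m F3 /\ is_cycle_factor m F4].
Proof.
exists (colour_class m 1), (colour_class m 2), (colour_class m 3), (colour_class m 4).
split.
- apply/setP => S; rewrite !inE -!andb_orr andb_idr // => /edge_setP[u [i [j ->]]].
  by rewrite edge_colourE //; have := colour_range u i j; lia.
- by repeat (apply/andP; split); rewrite disjoints_subset; apply/subsetP => S;
    rewrite !inE => /andP[_ /eqP->]; rewrite andbF.
- by split; apply: square_factor.
- by split; [apply: straight_factor | apply: twisted_factor].
Qed.
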